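(* The map $\rho:\mathrm{eval}_{-1}(\mathcal{B})\to\mathrm{GL}(2,\mathbb{Z})$ is an injective group homomorphism satisfying $\det\rho(B)=\det B$ for all $B\in\mathrm{eval}_{-1}(\mathcal{B})$.
   Context: For a matrix $A$ with Laurent polynomial entries, $\overline{A}$ denotes the matrix obtained by substituting $t\mapsto t^{-1}$ in every entry. Let $J_3=\begin{pmatrix}1&-t^{-1}&-t^{-1}\\-t&1&-t^{-1}\\-t&-t&1\end{pmatrix}$, $v=(t,t^2,t^3)$ (a row vector) and $\vec{1}=(1,1,1)^T$. The formal Burau group is $\mathcal{B}=\{A\in\mathrm{GL}(3,\mathbb{Z}[t,t^{-1}]) : vA=v,\ A\vec 1=\vec 1,\ \overline{A}J_3A^T=J_3\}$. $\mathrm{eval}_{-1}:\mathcal{B}\to\mathrm{GL}(3,\mathbb{Z})$ is evaluation of all entries at $t=-1$. For $B=(B_{ij})\in\mathrm{eval}_{-1}(\mathcal{B})$, $\rho(B)=\begin{pmatrix}1-B_{13}&1-B_{11}\\1-B_{33}&1-B_{31}\end{pmatrix}$. *)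

From HB Require Import structures.
From mathcomp Require Import all_boot all_order all_algebra.
From mathcomp Require Import generic_quotient fraction.
Set Implicit Arguments. Unset Strict Implicit. Unset Printing Implicit Defensive.
Import GRing.Theory.
Local Open Scope ring_scope.

(* The field of rational functions Q(t) = Frac(Z[t]); the Laurent polynomial
   ring Z[t,t^-1] is realised as the subring of elements p / t^n. *)
Definition F := {fraction {poly int}}.

Definition tF : F := @tofrac _ 'X.

Definition laurent (x : F) : Prop :=
  exists (n : nat) (p : {poly int}), x = @tofrac _ p / tF ^+ n.

Definition evalF (p : {poly int}) (y : F) : F := (map_poly (fun q : int => @tofrac _ (q%:P)) p).[y].

(* The involution t |-> t^-1 of Q(t) (computed on any representative a/b). *)
Definition barF (x : F) : F :=
  let r := repr x in
  evalF (frac r).1 (tF^-1) / evalF (frac r).2 (tF^-1).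

Definition barM (A : 'M[F]_3) : 'M[F]_3 := map_mx barF A.

Definition laurent_mx m n (A : 'M[F]_(m, n)) : Prop := forall i j, laurent (A i j).

Definition GL3L (A : 'M[F]_3) : Prop :=
  laurent_mx A /\ exists A' : 'M[F]_3, laurent_mx A' /\ A *m A' = 1%:M /\ A' *m A = 1%:M.

Definition J3 : 'M[F]_3 :=
  \matrix_(i < 3, j < 3)
     (if (i == j :> nat) then 1 else if (i < j)%N then - tF^-1 else - tF).

Definition vL : 'rV[F]_3 := \row_(j < 3) tF ^+ j.+1.
Definition oneL : 'cV[F]_3 := const_mx 1.

Definition formal_burau (A : 'M[F]_3) : Prop :=
  [/\ GL3L A, vL *m A = vL, A *m oneL = oneL & barM A *m J3 *m A^T = J3].

(* evaluation at t = -1 of a Laurent polynomial matrix (relational form: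
   A = P / t^n with P an integer polynomial matrix; the value is
   (-1)^n P(-1), which is independent of the representation). *)
Definition eval_m1 (A : 'M[F]_3) (B : 'M[int]_3) : Prop :=
  exists (n : nat) (P : 'M[{poly int}]_3),
    A = map_mx (fun p => @tofrac _ p / tF ^+ n) P /\
    B = map_mx (fun p => (-1) ^+ n * p.[-1]) P.

Definition evalB (B : 'M[int]_3) : Prop :=
  exists A, formal_burau A /\ eval_m1 A B.

Definition i0 : 'I_3 := @Ordinal 3 0 isT.
Definition i2 : 'I_3 := @Ordinal 3 2 isT.

Definition rho (B : 'M[int]_3) : 'M[int]_2 :=
  \matrix_(i < 2, j < 2)
    (if (i == 0 :> nat) then
       (if (j == 0 :> nat) then 1 - B i0 i2 else 1 - B i0 i0)
     else
       (if (j == 0 :> nat) then 1 - B i2 i2 else 1 - B i2 i0)).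

(* Evaluation at t = -1 is well defined and multiplicative on Laurent
   matrices, so every B in eval_{-1} of the formal Burau group is invertible,
   fixes the column 1 = (1,1,1)^T and fixes the row w = v(-1) = (-1,1,-1).
   Since w 1 = -1, Z^3 = Z 1 (+) ker w, and ker w has the basis (1,1,0)^T,
   (0,1,1)^T.  In the basis 1, (1,1,0)^T, (0,1,1)^T the matrix B becomes the
   block diagonal matrix 1 (+) rho(B); the four claims follow from this
   conjugacy. *)

From HB Require Import structures.
From mathcomp Require Import all_boot all_order all_algebra.
From mathcomp Require Import generic_quotient fraction lra.

Set Implicit Arguments.
Unset Strict Implicit.
Unset Printing Implicit Defensive.

Import GRing.Theory.
Local Open Scope ring_scope.

Local Notation tof := (@tofrac {poly int}).
Local Notation ev := (horner_eval (-1 : int)).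

Section Lift0Conjugation.
Variables (R : comUnitRingType) (n : nat).

Lemma lift0_mxM (A B : 'M[R]_n) : lift0_mx (A *m B) = lift0_mx A *m lift0_mx B.
Proof. by rewrite /lift0_mx mulmx_block !mulmx0 !mul0mx !addr0 !add0r mulmx1. Qed.

Lemma lift0_mx_inj : injective (@lift0_mx R n).
Proof. by move=> A B /eq_block_mx[]. Qed.

Lemma det_lift0_mx (A : 'M[R]_n) : \det (lift0_mx A) = \det A.
Proof. by rewrite det_ublock det1 mul1r. Qed.

Variables (S : 'M[R]_(1 + n) -> Prop) (f : 'M[R]_(1 + n) -> 'M[R]_n) (P : 'M[R]_(1 + n)).
Hypothesis P_unit : P \in unitmx.
Hypothesis conj_f : forall B, S B -> B *m P = P *m lift0_mx (f B).

Lemma conj_lift0E B : S B -> B = P *m lift0_mx (f B) *m invmx P.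
Proof. by move=> SB; rewrite -conj_f // mulmxK. Qed.

Lemma conj_lift0_inj B1 B2 : S B1 -> S B2 -> f B1 = f B2 -> B1 = B2.
Proof. by move=> S1 S2 eqf; rewrite [B1]conj_lift0E // [B2]conj_lift0E // eqf. Qed.

Lemma conj_lift0M B1 B2 : S B1 -> S B2 -> S (B1 *m B2) -> f (B1 *m B2) = f B1 *m f B2.
Proof.
move=> S1 S2 S12; apply/lift0_mx_inj/(can_inj (mulKmx P_unit)).
by rewrite -conj_f // lift0_mxM mulmxA -conj_f // -!mulmxA conj_f.
Qed.

Lemma det_conj_lift0 B : S B -> \det (f B) = \det B.
Proof.
move=> SB; have detP_unit : \det P \is a GRing.unit by rewrite -unitmxE.
apply: (mulrI detP_unit); rewrite -det_lift0_mx -det_mulmx -conj_f //.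
by rewrite det_mulmx mulrC.
Qed.

End Lift0Conjugation.

Lemma tF_neq0 : tF != 0.
Proof. by rewrite tofrac_eq0 polyX_eq0. Qed.

Lemma map_tofrac_inj m n : injective (map_mx tof : 'M_(m, n) -> 'M_(m, n)).
Proof.
move=> P Q /matrixP eqPQ; apply/matrixP => i j.
by have /eqP := eqPQ i j; rewrite !mxE tofrac_eq => /eqP.
Qed.

Lemma map_ev_Xn m n k (P : 'M[{poly int}]_(m, n)) :
  map_mx ev ('X^k *: P) = (-1) ^+ k *: map_mx ev P.
Proof. by rewrite map_mxZ /= horner_evalE hornerXn. Qed.

Lemma map_tofrac_Xn m n k (P : 'M[{poly int}]_(m, n)) :
  map_mx tof ('X^k *: P) = tF ^+ k *: map_mx tof P.
Proof. by rewrite map_mxZ rmorphXn. Qed.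

Definition eval_m1_mx m n (A : 'M[F]_(m, n)) (B : 'M[int]_(m, n)) : Prop :=
  exists k (P : 'M[{poly int}]_(m, n)),
    A = (tF ^+ k)^-1 *: map_mx tof P /\ B = (-1) ^+ k *: map_mx ev P.

Lemma eval_m1_mxP (A : 'M[F]_3) B : eval_m1 A B -> eval_m1_mx A B.
Proof.
case=> k [P [-> ->]]; exists k, P; split; apply/matrixP => i j; rewrite !mxE //.
by rewrite mulrC.
Qed.

Lemma eval_m1_mx_poly m n (P : 'M[{poly int}]_(m, n)) :
  eval_m1_mx (map_mx tof P) (map_mx ev P).
Proof. by exists 0%N, P; rewrite expr0 invr1 !scale1r. Qed.

Lemma eval_m1_mxM m n p (A1 : 'M_(m, n)) (A2 : 'M_(n, p)) B1 B2 :
  eval_m1_mx A1 B1 -> eval_m1_mx A2 B2 -> eval_m1_mx (A1 *m A2) (B1 *m B2).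
Proof.
move=> [k1 [P1 [-> ->]]] [k2 [P2 [-> ->]]]; exists (k1 + k2)%N, (P1 *m P2).
by rewrite -!scalemxAl -!scalemxAr !scalerA !map_mxM exprD invfM !exprD.
Qed.

Lemma eval_m1_mx_fun m n (A : 'M_(m, n)) B1 B2 :
  eval_m1_mx A B1 -> eval_m1_mx A B2 -> B1 = B2.
Proof.
move=> [k1 [P1 [-> ->]]] [k2 [P2 [eqA ->]]].
have tFk_neq0 k : tF ^+ k != 0 by rewrite expf_neq0 // tF_neq0.
(* Clearing denominators gives an identity over Z[t], which can be evaluated at -1. *)
have cross : 'X^k2 *: P1 = 'X^k1 *: P2.
  apply: map_tofrac_inj; rewrite !map_tofrac_Xn.
  have := congr1 ( *:%R (tF ^+ k1 * tF ^+ k2)) eqA.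
  by rewrite !scalerA mulrAC mulfV // mul1r -mulrA mulfV // mulr1.
have /(congr1 (map_mx ev)) := cross; rewrite !map_ev_Xn => crossm1.
by rewrite -[X in _ *: X](signrZK k2) crossm1 scalerA mulrC -scalerA signrZK.
Qed.

Lemma laurent_mx_eval m n (A : 'M[F]_(m, n)) : laurent_mx A -> exists B, eval_m1_mx A B.
Proof.
move=> lA; have /fin_all_exists[e eE] : forall ij : 'I_m * 'I_n,
    exists kp : nat * {poly int}, A ij.1 ij.2 = tof kp.2 / tF ^+ kp.1.
  by case=> i j; have [k [p ->]] := lA i j; exists (k, p).
pose k := (\max_ij (e ij).1)%N.
pose P := \matrix_(i, j) ('X^(k - (e (i, j)).1) * (e (i, j)).2).
suff -> : A = (tF ^+ k)^-1 *: map_mx tof P by exists ((-1) ^+ k *: map_mx ev P), k, P.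
apply/matrixP => i j; rewrite !mxE (eE (i, j)) rmorphM rmorphXn /=.
have le_k : ((e (i, j)).1 <= k)%N := @leq_bigmax _ (fun ij => (e ij).1) (i, j).
have -> : tF ^+ k = tF ^+ (k - (e (i, j)).1) * tF ^+ (e (i, j)).1 by rewrite -exprD subnK.
by rewrite -/tF invfM mulrAC mulKf // expf_neq0 // tF_neq0.
Qed.

Definition ones3 : 'cV[int]_3 := const_mx 1.
Definition w_m1 : 'rV[int]_3 := \row_(j < 3) (-1) ^+ j.+1.

Definition fixes_ones_w (B : 'M[int]_3) : Prop :=
  B *m ones3 = ones3 /\ w_m1 *m B = w_m1.

Lemma fixes_ones_wM B1 B2 : fixes_ones_w B1 -> fixes_ones_w B2 -> fixes_ones_w (B1 *m B2).
Proof. by move=> [o1 w1] [o2 w2]; split; [rewrite -mulmxA o2 | rewrite mulmxA w1]. Qed.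

Lemma evalB_fixes_ones_w B : evalB B -> fixes_ones_w B /\ B \in unitmx.
Proof.
case=> A [[[_ [A' [lA' [AA' _]]]] vA oA _] /eval_m1_mxP eAB].
have eOne : eval_m1_mx oneL ones3.
  by have := eval_m1_mx_poly (const_mx 1 : 'cV_3); rewrite !map_const_mx !rmorph1.
have eV : eval_m1_mx vL w_m1.
  have := eval_m1_mx_poly (\row_(j < 3) 'X^(j.+1)).
  congr eval_m1_mx; apply/matrixP => i j.
    by rewrite !mxE rmorphXn.
  by rewrite !mxE /= horner_evalE hornerXn.
have [B' eA'B'] := laurent_mx_eval lA'.
have eId := eval_m1_mx_poly (1%:M : 'M_3); rewrite !map_mx1 in eId.
split; [split|].
- by apply: (eval_m1_mx_fun (eval_m1_mxM eAB eOne)); rewrite oA.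
- by apply: (eval_m1_mx_fun (eval_m1_mxM eV eAB)); rewrite vA.
- have /mulmx1_unit[] // : B *m B' = 1%:M.
  by apply: (eval_m1_mx_fun (eval_m1_mxM eAB eA'B')); rewrite AA'.
Qed.

Definition ker_basis : 'M[int]_(3, 2) :=
  \matrix_(i, j) nth 0 (nth [::] [:: [:: 1; 0]; [:: 1; 1]; [:: 0; 1]] i) j.
Definition ker_dual : 'M[int]_(2, 3) :=
  \matrix_(i, j) nth 0 (nth [::] [:: [:: 0; 1; -1]; [:: -1; 1; 0]] i) j.
Definition adapted_basis : 'M[int]_(1 + 2) := row_mx ones3 ker_basis.

Lemma adapted_basis_unit : adapted_basis \in unitmx.
Proof.
suff /mulmx1_unit[] : col_mx (- w_m1) ker_dual *m adapted_basis = 1%:M by [].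
rewrite mul_col_row scalar_mx_block.
by congr block_mx; apply/matrixP => -[[|[|[|?]]] ?] // -[[|[|[|?]]] ?] //;
  rewrite !mxE !big_ord_recl !big_ord0 !mxE.
Qed.

Lemma mul_ker_basis B : fixes_ones_w B -> B *m ker_basis = ker_basis *m rho B.
Proof.
case=> /matrixP row_sum /matrixP col_alt.
(* Entries are reindexed by nat so that lra sees e.g. [B i0 i2] and the entry
   produced by case analysis on an ordinal as the same atom. *)
pose b i j := B (inord i) (inord j).
have bE i j : B i j = b i j by rewrite /b !inord_val.
have := row_sum i0 0; have := row_sum (Ordinal (isT : (1 < 3)%N)) 0; have := row_sum i2 0.
have := col_alt 0 i0; have := col_alt 0 i2.
rewrite !mxE !big_ord_recl !big_ord0 !mxE !bE /bump /= => c2 c0 r2 r1 r0.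
apply/matrixP => i j; rewrite !mxE !big_ord_recl !big_ord0 !mxE !bE /bump /=.
by case: i => [[|[|[|//]]] ?]; case: j => [[|[|//]] ?] /=; lra.
Qed.

Lemma mul_adapted_basis B :
  fixes_ones_w B -> B *m adapted_basis = adapted_basis *m lift0_mx (rho B).
Proof.
move=> fixB; rewrite mul_mx_row mul_row_block mul_ker_basis // (proj1 fixB).
by rewrite mulmx1 !mulmx0 addr0 add0r.
Qed.

Theorem lemma3p8 :
  (forall B : 'M[int]_3, evalB B -> rho B \in unitmx) /\
  (forall B1 B2 : 'M[int]_3, evalB B1 -> evalB B2 ->
     rho (B1 *m B2) = rho B1 *m rho B2) /\
  (forall B1 B2 : 'M[int]_3, evalB B1 -> evalB B2 -> rho B1 = rho B2 -> B1 = B2) /\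
  (forall B : 'M[int]_3, evalB B -> \det (rho B) = \det B).
Proof.
have basis_conj := mul_adapted_basis; have P_unit := adapted_basis_unit.
split; [|split; [|split]].
- move=> B /evalB_fixes_ones_w[fixB B_unit].
  by rewrite unitmxE (det_conj_lift0 P_unit basis_conj fixB) -unitmxE.
- move=> B1 B2 /evalB_fixes_ones_w[fix1 _] /evalB_fixes_ones_w[fix2 _].
  exact: (conj_lift0M P_unit basis_conj fix1 fix2 (fixes_ones_wM fix1 fix2)).
- move=> B1 B2 /evalB_fixes_ones_w[fix1 _] /evalB_fixes_ones_w[fix2 _].
  exact: (conj_lift0_inj P_unit basis_conj fix1 fix2).
- by move=> B /evalB_fixes_ones_w[fixB _]; exact: (det_conj_lift0 P_unit basis_conj fixB).
Qed.
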